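(* Let $(R,\mathcal C)$ be a pair and $\mathfrak a$ a radical $\mathcal C$-ideal such that $(R,\mathcal C)$ is non-degenerate along $\mathfrak a$. Let $b$ be a test element of $(R,\mathcal C)$ along $\mathfrak a$. Then $\tau_{\mathfrak a}(R,\mathcal C)=Rb+\mathcal C_+b$. Furthermore, $(R,\mathcal C)$ is purely $F$-regular along $\mathfrak a$ if and only if $1$ is a principal test element of $(R,\mathcal C)$ along $\mathfrak a$, i.e. for every $r\in R$ not in any associated prime of $R/\mathfrak a$ there exist $e>0$ and $\phi\in\mathcal C_e$ with $\phi(F^e_*r)=1$.
   Context: All rings are noetherian $F$-finite commutative $\mathbb F_p$-algebras. $F^e_*R$ is $R$ viewed as an $R$-module via the $e$-th Frobenius, $\mathcal C_{e,R}=\operatorname{Hom}_R(F^e_*R,R)$, $\mathcal C_R=\bigoplus_{e\ge0}\mathcal C_{e,R}$ with product $\phi\cdot\phi'=\phi\circ F^e_*\phi'$. A pair $(R,\mathcal C)$ consists of $R$ and a graded $R$-subalgebra $\mathcal C\subseteq\mathcal C_R$; $\mathcal C_+=\bigoplus_{e>0}\mathcal C_e$. A $\mathcal C$-ideal is an ideal $\mathfrak b$ with $\phi(F^e_*\mathfrak b)\subseteq\mathfrak b$ for all $\phi\in\mathcal C_e$. $\mathcal C_+b$ denotes the ideal generated by all $\phi(F^e_*(rb))$, $e>0$, $\phi\in\mathcal C_e$, $r\in R$. A prime $\mathcal C$-ideal $\mathfrak p$ is a center of $F$-purity if $\mathcal C_+R\not\subseteq\mathfrak p$; $(R,\mathcal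 C)$ is non-degenerate along $\mathfrak a$ if all minimal primes of $\mathfrak a$ are centers of $F$-purity, and purely $F$-regular along $\mathfrak a$ if moreover every proper $\mathcal C$-ideal lies in some minimal prime of $\mathfrak a$. Let $U=\bigcup_{\mathfrak q\in\operatorname{Ass}(R/\mathfrak a)}\mathfrak q$. A principal test element along $\mathfrak a$ is $c\notin U$ such that for every $r\notin U$ there are $e>0$, $\phi\in\mathcal C_e$ with $\phi(F^e_*r)=c$ (such elements exist under the hypotheses). The test ideal $\tau_{\mathfrak a}(R,\mathcal C)$ is the smallest $\mathcal C$-ideal not contained in $U$ (equivalently $Rc+\mathcal C_+c$ for a principal test element $c$); a test element is an element of $\tau_{\mathfrak a}(R,\mathcal C)\setminus U$. *)

From mathcomp Require Import all_boot all_algebra.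
Set Implicit Arguments. Unset Strict Implicit. Unset Printing Implicit Defensive.
Import GRing.Theory.
Local Open Scope ring_scope.

Section Defs.
Variable R : comNzRingType.

Definition subsetR (I J : R -> Prop) := forall x, I x -> J x.

Definition is_ideal (I : R -> Prop) : Prop :=
  [/\ I 0, (forall x y, I x -> I y -> I (x + y)) & (forall r x, I x -> I (r * x))].

Definition is_prime (P : R -> Prop) : Prop :=
  [/\ is_ideal P, ~ P 1 & (forall x y, P (x * y) -> P x \/ P y)].

Definition is_radical (I : R -> Prop) : Prop :=
  is_ideal I /\ forall x n, I (x ^+ n) -> I x.

Definition ideal_gen (S : R -> Prop) (x : R) : Prop :=
  forall I, is_ideal I -> subsetR S I -> I x.

Definition ideal_add (I J : R -> Prop) (x : R) : Prop :=
  exists i j, [/\ I i, J j & x = i + j].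

Definition principal (b : R) (x : R) : Prop := exists r, x = r * b.

Definition noetherian : Prop :=
  forall I : nat -> R -> Prop, (forall n, is_ideal (I n)) ->
    (forall n, subsetR (I n) (I n.+1)) ->
    exists N, forall n, (N <= n)%N -> subsetR (I n) (I N).

(* F-finite: F_* R is a finitely generated R-module, where r acts on
   F_* R by x |-> r^p x *)
Definition F_finite (p : nat) : Prop :=
  exists s : seq R, forall x, exists c : seq R,
    x = \sum_(i < size s) (c`_i ^+ p) * s`_i.

(* phi : F^e_* R -> R is R-linear, i.e. an element of C_{e,R} *)
Definition cartier_map (p e : nat) (phi : R -> R) : Prop :=
  (forall x y, phi (x + y) = phi x + phi y) /\
  (forall r x, phi (r ^+ (p ^ e) * x) = r * phi x).

(* a pair (R, C): C e phi means phi \in C_e; C is a graded R-subalgebra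
   of C_R = \bigoplus_e Hom_R(F^e_* R, R) with product phi . psi = phi o psi *)
Definition is_pair (p : nat) (C : nat -> (R -> R) -> Prop) : Prop :=
  [/\ (forall e phi, C e phi -> cartier_map p e phi),
      (forall r, C 0%N (fun x => r * x)),
      (forall e, C e (fun _ => 0)),
      (forall e phi psi, C e phi -> C e psi -> C e (fun x => phi x + psi x)) &
      (forall e e' phi psi, C e phi -> C e' psi -> C (e + e')%N (fun x => phi (psi x)))].

Variable C : nat -> (R -> R) -> Prop.

Definition C_ideal (b : R -> Prop) : Prop :=
  is_ideal b /\ forall e phi x, C e phi -> b x -> b (phi x).

Definition Cplus (b : R) : R -> Prop :=
  ideal_gen (fun x => exists e phi r, [/\ (0 < e)%N, C e phi & x = phi (r * b)]).

Definition minimal_prime (a q : R -> Prop) : Prop :=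
  [/\ is_prime q, subsetR a q &
      forall q', is_prime q' -> subsetR a q' -> subsetR q' q -> subsetR q q'].

(* associated primes of R/a : primes of the form (a : x) *)
Definition assoc_prime (a q : R -> Prop) : Prop :=
  is_prime q /\ exists x, forall r, q r <-> a (r * x).

Definition inU (a : R -> Prop) (r : R) : Prop :=
  exists q, assoc_prime a q /\ q r.

Definition F_purity_center (P : R -> Prop) : Prop :=
  [/\ is_prime P, C_ideal P & ~ subsetR (Cplus 1) P].

Definition non_degenerate (a : R -> Prop) : Prop :=
  forall q, minimal_prime a q -> F_purity_center q.

Definition purely_F_regular (a : R -> Prop) : Prop :=
  non_degenerate a /\
  forall J, C_ideal J -> ~ J 1 -> exists q, minimal_prime a q /\ subsetR J q.

Definition principal_test_element (a : R -> Prop) (c : R) : Prop :=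
  ~ inU a c /\
  forall r, ~ inU a r -> exists e phi, [/\ (0 < e)%N, C e phi & phi r = c].

(* test ideal: the smallest C-ideal not contained in U, realised as the
   intersection of all C-ideals not contained in U *)
Definition test_ideal (a : R -> Prop) (x : R) : Prop :=
  forall J, C_ideal J -> ~ subsetR J (inU a) -> J x.

Definition test_element (a : R -> Prop) (b : R) : Prop :=
  test_ideal a b /\ ~ inU a b.

End Defs.

From mathcomp Require Import all_boot all_algebra.
From mathcomp Require Import ring.
From Stdlib Require Import Classical ClassicalEpsilon.
From Stdlib Require List.
Import GRing.Theory.
Local Open Scope ring_scope.

(* The test-ideal formula is formal: Rb + C_+b is a C-ideal containing b, which
   is not in U, and every C-ideal not contained in U contains the test element b,
   hence Rb + C_+b.

   For the equivalence, a radical ideal a of a noetherian ring is a finite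
   intersection of primes, so the associated primes of R/a are exactly its
   finitely many minimal primes and U is their union.  If (R, C) is purely
   F-regular, non-degeneracy forces 1 in C_+1, i.e. psi(1) = 1 for some psi,
   and then r = psi(r^(p^e)) lies in C_+r; for r outside U the C-ideal C_+r is
   therefore in no minimal prime, so it is the unit ideal.  A single phi with
   phi(r) = 1 exists because for fixed e the images phi(F^e_* r) form an ideal
   and these ideals multiply along e; hence the elements having a power in one
   of them form an ideal, which contains C_+r.  Conversely, if 1 is a principal
   test element, every proper C-ideal lies in U, hence by prime avoidance in
   a single minimal prime. *)

Section Ideals.
Set Implicit Arguments. Unset Strict Implicit.
Variable R : comNzRingType.
Implicit Types (I J a b q : R -> Prop) (c x y z r : R).

Lemma ideal0 I : is_ideal I -> I 0. Proof. by case. Qed.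

Lemma idealD I x y : is_ideal I -> I x -> I y -> I (x + y).
Proof. by case=> _ h _; apply: h. Qed.

Lemma idealMl I r x : is_ideal I -> I x -> I (r * x).
Proof. by case=> _ _ h; apply: h. Qed.

Lemma idealMr I r x : is_ideal I -> I x -> I (x * r).
Proof. by move=> II Ix; rewrite mulrC; apply: idealMl. Qed.

Lemma idealB I x y : is_ideal I -> I x -> I y -> I (x - y).
Proof. by move=> II Ix Iy; rewrite -mulN1r; apply: idealD => //; apply: idealMl. Qed.

Lemma ideal_sum I n (F : 'I_n -> R) :
  is_ideal I -> (forall i, I (F i)) -> I (\sum_(i < n) F i).
Proof.
by move=> II IF; apply: (big_ind I) => //; [apply: ideal0 | move=> u v; apply: idealD].
Qed.

Lemma ideal_exprDn I x y n m :
  is_ideal I -> I (x ^+ n) -> I (y ^+ m) -> I ((x + y) ^+ (n + m)).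
Proof.
move=> II Ixn Iym; rewrite exprDn; apply: ideal_sum => // i.
rewrite -mulr_natl; apply: idealMl => //.
case: (leqP m i) => [m_le_i | i_lt_m].
  by rewrite -(subnKC m_le_i) exprD; apply: idealMl => //; apply: idealMr.
by rewrite -addnBA ?(ltnW i_lt_m) // exprD; apply: idealMr => //; apply: idealMr.
Qed.

Lemma ideal_gen_ideal (S : R -> Prop) : is_ideal (ideal_gen S).
Proof.
split.
- by move=> I II _; apply: ideal0.
- by move=> x y Sx Sy I II SI; apply: idealD => //; [apply: Sx | apply: Sy].
- by move=> r x Sx I II SI; apply: idealMl => //; apply: Sx.
Qed.

Lemma principal_ideal c : is_ideal (principal c).
Proof.
split; first by exists 0; rewrite mul0r.
- by move=> _ _ [r ->] [s ->]; exists (r + s); rewrite mulrDl.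
- by move=> t _ [r ->]; exists (t * r); rewrite mulrA.
Qed.

Lemma ideal_add_ideal I J : is_ideal I -> is_ideal J -> is_ideal (ideal_add I J).
Proof.
move=> II JI; split.
- by exists 0, 0; rewrite addr0; split=> //; apply: ideal0.
- move=> _ _ [i [j [Ii Jj ->]]] [i' [j' [Ii' Jj' ->]]].
  by exists (i + i'), (j + j'); split; [apply: idealD | apply: idealD | ring].
- move=> r _ [i [j [Ii Jj ->]]]; exists (r * i), (r * j).
  by split; [apply: idealMl | apply: idealMl | ring].
Qed.

Definition rad I z := exists n, I (z ^+ n).

Lemma rad_radical I : is_ideal I -> is_radical (rad I).
Proof.
move=> II; split; first split.
- by exists 1%N; rewrite expr1; apply: ideal0.
- by move=> x y [n Ixn] [m Iym]; exists (n + m)%N; apply: ideal_exprDn.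
- by move=> r x [n Ixn]; exists n; rewrite exprMn; apply: idealMl.
- by move=> x n [m Ixnm]; exists (n * m)%N; rewrite exprM.
Qed.

Lemma sub_rad I : subsetR I (rad I).
Proof. by move=> x Ix; exists 1%N; rewrite expr1. Qed.

Lemma not_subsetRP I J : ~ subsetR I J -> exists x, I x /\ ~ J x.
Proof.
move=> nIJ; apply: NNPP => nx; apply: nIJ => x Ix.
by apply: NNPP => nJx; apply: nx; exists x.
Qed.

Lemma prime_avoid_product q (S : (R -> Prop) -> Prop) L : is_prime q ->
  (forall q', List.In q' L -> S q' -> is_ideal q' /\ ~ subsetR q' q) ->
  exists w, ~ q w /\ forall q', List.In q' L -> S q' -> q' w.
Proof.
move=> [_ q_N1 q_prime]; elim: L => [|q0 L IH] hL; first by exists 1.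
have [w [qNw wL]] := IH (fun q' Lq' => hL q' (or_intror Lq')).
case: (classic (S q0)) => S0; last by exists w; split=> // q' [<- /S0 | /wL].
have [q0I /not_subsetRP [z [q0z qNz]]] := hL q0 (or_introl erefl) S0.
exists (z * w); split; first by case/q_prime.
move=> q' [<- _ | Lq' Sq']; first exact: idealMr.
by apply: idealMl (wL q' Lq' Sq'); case: (hL q' (or_intror Lq') Sq').
Qed.

Section PrimeAvoidance.
Variable P : (R -> Prop) -> Prop.
Hypothesis P_prime : forall q, P q -> is_prime q.
Hypothesis P_antichain : forall q q', P q -> P q' -> subsetR q' q -> subsetR q q'.

Lemma prime_avoid_element J L : is_ideal J ->
  (forall q, List.In q L -> P q -> ~ subsetR J q) ->
  exists x, J x /\ forall q, List.In q L -> P q -> ~ q x.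
Proof.
move=> JI; elim: L => [|q L IH] hL; first by exists 0; split=> //; apply: ideal0.
have [x [Jx xL]] := IH (fun q' Lq' => hL q' (or_intror Lq')).
case: (classic (P q /\ q x)) => [[Pq qx] | qNx]; last first.
  by exists x; split=> // q' [<- Pq qx | /xL //]; apply: qNx.
have [qI _ q_prime] := P_prime Pq.
have [w [qNw wL]] : exists w, ~ q w /\ forall q', List.In q' L -> P q' -> q' w.
  apply: prime_avoid_product (P_prime Pq) _ => q' Lq' Pq'; split.
    by case: (P_prime Pq').
  by move=> /(P_antichain Pq Pq') qq'; apply: xL Lq' Pq' (qq' x qx).
have [y [Jy qNy]] := not_subsetRP (hL q (or_introl erefl) Pq).
(* x is in q and avoids the earlier P-primes, y * w does the opposite. *)
exists (x + y * w); split; first by apply: idealD => //; apply: idealMr.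
move=> q' [<- _ | Lq' Pq'] q'xyw.
  by have := idealB qI q'xyw qx; rewrite addrC addKr => /q_prime [].
have [q'I _ _] := P_prime Pq'.
apply: (xL q' Lq' Pq'); rewrite -(addrK (y * w) x).
by apply: idealB => //; apply: idealMl (wL q' Lq' Pq').
Qed.

Lemma prime_avoidance J L : is_ideal J ->
  (forall x, J x -> exists q, [/\ List.In q L, P q & q x]) ->
  exists q, P q /\ subsetR J q.
Proof.
move=> JI JU; apply: NNPP => nJ.
have [x [Jx xL]] := prime_avoid_element (L := L) JI
  (fun q _ Pq Jq => nJ (ex_intro _ q (conj Pq Jq))).
by have [q [Lq Pq qx]] := JU x Jx; apply: xL Lq Pq qx.
Qed.

End PrimeAvoidance.

Lemma noetherian_maximal (F : (R -> Prop) -> Prop) I0 : noetherian R ->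
  (forall I, F I -> is_ideal I) -> F I0 ->
  exists I, F I /\ forall J, F J -> subsetR I J -> subsetR J I.
Proof.
move=> RN FI FI0; apply: NNPP => noMax.
(* Otherwise choice yields a strictly increasing chain of ideals in F. *)
have next (s : {I | F I}) : {J | F J /\ subsetR (sval s) J /\ ~ subsetR J (sval s)}.
  apply: constructive_indefinite_description; apply: NNPP => noJ.
  apply: noMax; exists (sval s); split=> [|J FJ sJ]; first exact: (svalP s).
  by apply: NNPP => Js; apply: noJ; exists J.
pose f (s : {I | F I}) : {I | F I} := exist F (sval (next s)) (proj1 (svalP (next s))).
pose chain n := sval (iter n f (exist F I0 FI0)).
have [N stable] := RN chain (fun n => FI _ (svalP (iter n f _)))
   (fun n => proj1 (proj2 (svalP (next (iter n f _))))).
exact: (proj2 (proj2 (svalP (next (iter N f _))))) (stable N.+1 (leqnSn N)).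
Qed.

Definition prime_decomposition a (L : seq (R -> Prop)) :=
  (forall q, List.In q L -> is_prime q /\ subsetR a q) /\
  (forall x, (forall q, List.In q L -> q x) -> a x).

Lemma prime_decomposition_cat a I J L1 L2 : is_radical a ->
  subsetR a I -> subsetR a J -> (forall u v, I u -> J v -> a (u * v)) ->
  prime_decomposition (rad I) L1 -> prime_decomposition (rad J) L2 ->
  prime_decomposition a (L1 ++ L2).
Proof.
move=> [_ a_rad] aI aJ IJa [L1P L1I] [L2P L2J]; split.
  move=> q /List.in_app_iff [/L1P | /L2P] [qP radq]; split=> // x ax.
    by apply/radq/sub_rad/aI.
  by apply/radq/sub_rad/aJ.
move=> x xL.
have [n Ixn] := L1I x (fun q Lq => xL q (List.in_or_app _ _ _ (or_introl Lq))).
have [m Jxm] := L2J x (fun q Lq => xL q (List.in_or_app _ _ _ (or_intror Lq))).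
by apply: (a_rad x (n + m)%N); rewrite exprD; apply: IJa.
Qed.

Lemma ideal_add_principal_mul b x y : is_ideal b -> b (x * y) ->
  forall u v, ideal_add b (principal x) u -> ideal_add b (principal y) v -> b (u * v).
Proof.
move=> bI bxy _ _ [i [_ [bi [s ->] ->]]] [j [_ [bj [t ->] ->]]].
have -> : (i + s * x) * (j + t * y) = i * (j + t * y) + (s * x * j + s * t * (x * y)).
  by ring.
by apply: idealD => //; [apply: idealMr | apply: idealD => //; apply: idealMl].
Qed.

(* A maximal radical ideal b without decomposition would be prime: if xy is in b
   but x and y are not, the decompositions of rad (b + Rx) and rad (b + Ry)
   together decompose b. *)
Lemma radical_prime_decomposition a : noetherian R -> is_radical a ->
  exists L, prime_decomposition a L.
Proof.
move=> RN a_rad; apply: NNPP => aNL.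
have [b [[b_rad bNL] b_max]] := @noetherian_maximal
  (fun b => is_radical b /\ ~ exists L, prime_decomposition b L) a RN
  (fun I h => proj1 (proj1 h)) (conj a_rad aNL).
have bI := proj1 b_rad.
case: (classic (b 1)) => b1.
  by apply: bNL; exists [::]; split=> // x _; rewrite -(mulr1 x); apply: idealMl.
case: (classic (is_prime b)) => b_prime.
  by apply: bNL; exists [:: b]; split=> [q [<- | []] | x xb]; [split | apply: xb; left].
have [x [y [bxy [bNx bNy]]]] : exists x y, b (x * y) /\ ~ b x /\ ~ b y.
  apply: NNPP => nxy; apply: b_prime; split=> // u v buv.
  apply: NNPP => nuv; apply: nxy; exists u, v.
  by split=> //; split=> ?; apply: nuv; [left | right].
have b_sub c : subsetR b (ideal_add b (principal c)).
  by move=> z bz; exists z, 0; split=> //; [exists 0; rewrite mul0r | rewrite addr0].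
have enlarge c :
    ~ b c -> exists L, prime_decomposition (rad (ideal_add b (principal c))) L.
  move=> bNc; apply: NNPP => noL; apply: bNc.
  have cI := ideal_add_ideal bI (principal_ideal c).
  apply: (b_max _ (conj (rad_radical cI) noL)); first by move=> z /b_sub /sub_rad.
  exists 1%N, 0, c; rewrite expr1 add0r.
  by split=> //; [apply: ideal0 | exists 1; rewrite mul1r].
have [L1 L1P] := enlarge x bNx; have [L2 L2P] := enlarge y bNy.
apply: bNL; exists (L1 ++ L2); apply: prime_decomposition_cat L1P L2P => //.
exact: ideal_add_principal_mul.
Qed.

Lemma assoc_prime_minimal a q : is_radical a -> assoc_prime a q -> minimal_prime a q.
Proof.
move=> [aI a_rad] [q_prime [x qax]]; have [qI q_N1 _] := q_prime.
split=> //; first by move=> r ar; apply/qax; apply: idealMr.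
move=> q' [_ _ q'_prime] aq' q'q r /qax /aq' /q'_prime [// | /q'q /qax].
by rewrite -expr2 => /a_rad ax; exfalso; apply: q_N1; apply/qax; rewrite mul1r.
Qed.

Lemma minimal_prime_annihilator a q L : minimal_prime a q ->
  (forall q', List.In q' L -> is_prime q' /\ subsetR a q') ->
  exists x, ~ q x /\ forall r, q r -> forall q', List.In q' L -> q' (r * x).
Proof.
move=> [[qI q_N1 q_prime] aq q_min]; elim: L => [|q0 L IH] hL; first by exists 1.
have [x [qNx xL]] := IH (fun q' Lq' => hL q' (or_intror Lq')).
have [q0_prime aq0] := hL q0 (or_introl erefl); have [q0I _ _] := q0_prime.
case: (classic (subsetR q0 q)) => [q0q | /not_subsetRP [z [q0z qNz]]].
  exists x; split=> // r qr q' [<- | /(xL r qr) //].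
  by apply: idealMr => //; apply: (q_min q0).
exists (z * x); split; first by case/q_prime.
move=> r qr q' [<- | Lq']; first by rewrite mulrCA; apply: idealMr.
have [[q'I _ _] _] := hL q' (or_intror Lq').
by rewrite mulrCA; apply: idealMl (xL r qr q' Lq').
Qed.

Lemma minimal_prime_assoc a q L :
  prime_decomposition a L -> minimal_prime a q -> assoc_prime a q.
Proof.
move=> [LP La] q_min; have [q_prime aq _] := q_min; have [_ _ q_mul] := q_prime.
have [x [qNx qxL]] := minimal_prime_annihilator q_min LP.
split=> //; exists x => r; split; first by move/qxL/La.
by move/aq/q_mul => [].
Qed.

Lemma prime_decomposition_below a q L : prime_decomposition a L ->
  is_prime q -> subsetR a q -> exists q', List.In q' L /\ subsetR q' q.
Proof.
move=> [LP La] q_prime aq; apply: NNPP => noq'.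
have [w [qNw wL]] : exists w, ~ q w /\ forall q', List.In q' L -> True -> q' w.
  apply: prime_avoid_product q_prime _ => q' Lq' _.
  by split=> [|q'q]; [case: (LP q' Lq') => [[]] | apply: noq'; exists q'].
by apply/qNw/aq/La => q' Lq'; apply: wL.
Qed.

Lemma inU_minimal a L x : is_radical a -> prime_decomposition a L ->
  inU a x -> exists q, [/\ List.In q L, minimal_prime a q & q x].
Proof.
move=> a_rad aL [q [/(assoc_prime_minimal a_rad) q_min qx]].
have [q_prime aq q_minP] := q_min.
have [q' [Lq' q'q]] := prime_decomposition_below aL q_prime aq.
have [q'_prime aq'] := proj1 aL q' Lq'.
have qq' := q_minP q' q'_prime aq' q'q.
exists q'; split=> //; last exact: qq'.
split=> // q'' q''_prime aq'' q''q'.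
move=> z q'z; apply: (q_minP q'' q''_prime aq'') (q'q z q'z).
by move=> u /q''q' /q'q.
Qed.

End Ideals.

Section CartierAlgebra.
Set Implicit Arguments. Unset Strict Implicit.
Variables (R : comNzRingType) (p : nat) (C : nat -> (R -> R) -> Prop).
Hypothesis C_pair : is_pair p C.
Implicit Types (a : R -> Prop) (b r s x y : R) (phi psi : R -> R).

Lemma C_cartier e phi : C e phi -> cartier_map p e phi.
Proof. by case: C_pair => h _ _ _ _; apply: h. Qed.

Lemma C_scale r : C 0 (fun x => r * x). Proof. by case: C_pair. Qed.

Lemma C_zero e : C e (fun _ => 0). Proof. by case: C_pair. Qed.

Lemma C_add e phi psi : C e phi -> C e psi -> C e (fun x => phi x + psi x).
Proof. by case: C_pair => _ _ _ h _; apply: h. Qed.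

Lemma C_comp e e' phi psi : C e phi -> C e' psi -> C (e + e') (fun x => phi (psi x)).
Proof. by case: C_pair => _ _ _ _ h; apply: h. Qed.

Lemma C_additive e phi x y : C e phi -> phi (x + y) = phi x + phi y.
Proof. by move/C_cartier => []. Qed.

Lemma C_semilinear e phi r x : C e phi -> phi (r ^+ (p ^ e) * x) = r * phi x.
Proof. by move/C_cartier => []. Qed.

Lemma C_phi0 e phi : C e phi -> phi 0 = 0.
Proof. by move=> Cphi; have := C_semilinear 0 0 Cphi; rewrite mulr0 mul0r. Qed.

Lemma C0_linear phi r x : C 0 phi -> phi (r * x) = r * phi x.
Proof. by move=> Cphi; have := C_semilinear r x Cphi; rewrite expn0 expr1. Qed.

Definition Cimg e x y := exists2 phi, C e phi & y = phi x.

Lemma Cimg_ideal e x : is_ideal (Cimg e x).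
Proof.
split.
- by exists (fun _ => 0); first exact: C_zero.
- move=> _ _ [phi Cphi ->] [psi Cpsi ->].
  by exists (fun y => phi y + psi y); first exact: C_add.
- move=> r _ [phi Cphi ->]; exists (fun y => r * phi y) => //.
  by have := C_comp (C_scale r) Cphi; rewrite add0n.
Qed.

Hypothesis p_gt0 : (0 < p)%N.

(* At u = x the witness below is phi (psi(x)^(p^e) * x) = psi(x) * phi(x). *)
Lemma Cimg_mul x e e' y z : Cimg e x y -> Cimg e' x z -> Cimg (e + e') x (y * z).
Proof.
move=> [phi Cphi ->] [psi Cpsi ->]; set c := x * psi x ^+ (p ^ e).-1.
exists (fun u => phi (c * psi u)).
  by have := C_comp Cphi (C_comp (C_scale c) Cpsi); rewrite add0n.
have -> : c * psi x = psi x ^+ (p ^ e) * x.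
  by rewrite /c -mulrA -exprSr prednK ?expn_gt0 ?p_gt0 // mulrC.
by rewrite C_semilinear // mulrC.
Qed.

Lemma Cimg_exp x e y k : Cimg e x y -> Cimg (k.+1 * e) x (y ^+ k.+1).
Proof.
move=> xy; elim: k => [|k IH]; first by rewrite mul1n expr1.
by rewrite exprS mulSn; apply: Cimg_mul.
Qed.

Definition Cimg_rad x y := exists n e, (0 < e)%N /\ Cimg e x (y ^+ n).

Lemma Cimg_rad_ideal x : is_ideal (Cimg_rad x).
Proof.
split.
- by exists 1%N, 1%N; split=> //; rewrite expr1; apply: ideal0 (Cimg_ideal 1 x).
- move=> y z [n [e [e_gt0 xy]]] [m [e' [e'_gt0 xz]]].
  case: e e_gt0 xy => // e _ xy; case: e' e'_gt0 xz => // e' _ xz.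
  exists (n * e'.+1 + m * e.+1)%N, (e.+1 * e'.+1)%N; split=> //.
  apply: ideal_exprDn; first exact: Cimg_ideal.
    by rewrite exprM mulnC; apply: Cimg_exp.
  by rewrite exprM; apply: Cimg_exp.
- move=> r y [n [e [e_gt0 xy]]]; exists n, e; split=> //.
  by rewrite exprMn; apply: idealMl => //; apply: Cimg_ideal.
Qed.

Lemma Cplus_sub_Cimg_rad x : subsetR (Cplus C x) (Cimg_rad x).
Proof.
move=> y; apply; first exact: Cimg_rad_ideal.
move=> _ [e [phi [r [e_gt0 Cphi ->]]]]; exists 1%N, e; split=> //.
exists (fun u => phi (r * u)); last by rewrite expr1.
by have := C_comp Cphi (C_scale r); rewrite addn0.
Qed.

Lemma Cplus_one_single x :
  Cplus C x 1 -> exists e phi, [/\ (0 < e)%N, C e phi & phi x = 1].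
Proof.
move=> /Cplus_sub_Cimg_rad [n [e [e_gt0 [phi Cphi phix]]]].
by exists e, phi; split=> //; rewrite -phix expr1n.
Qed.

Lemma Cplus_self r : Cplus C 1 1 -> Cplus C r r.
Proof.
move=> /Cplus_one_single [e [psi [e_gt0 Cpsi psi1]]] I _ gen; apply: gen.
exists e, psi, (r ^+ (p ^ e).-1); split=> //.
rewrite -exprSr prednK ?expn_gt0 ?p_gt0 // -[_ ^+ _]mulr1.
by rewrite C_semilinear // psi1 mulr1.
Qed.

Lemma Cplus_closed b e phi s c : C e phi -> Cplus C b c -> Cplus C b (phi (s * c)).
Proof.
have CbI : is_ideal (Cplus C b) := ideal_gen_ideal _.
move=> Cphi bc; move: e phi s Cphi.
apply: (bc (fun c => forall e phi s, C e phi -> Cplus C b (phi (s * c)))).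
  split.
  - by move=> e phi s Cphi; rewrite mulr0 (C_phi0 Cphi); apply: ideal0.
  - move=> u v bu bv e phi s Cphi; rewrite mulrDr (C_additive _ _ Cphi).
    exact: idealD CbI (bu _ _ _ Cphi) (bv _ _ _ Cphi).
  - by move=> r u bu e phi s Cphi; rewrite mulrA; apply: bu Cphi.
move=> _ [e' [psi [t [e'_gt0 Cpsi ->]]]] e phi s Cphi I _ gen; apply: gen.
exists (e + e')%N, (fun u => phi (s * psi u)), t; split=> //.
- by rewrite addn_gt0 e'_gt0 orbT.
- by have := C_comp Cphi (C_comp (C_scale s) Cpsi); rewrite add0n.
Qed.

Lemma Cplus_Cideal b : C_ideal C (Cplus C b).
Proof.
split; first exact: ideal_gen_ideal.
by move=> e phi x Cphi bx; have := Cplus_closed 1 Cphi bx; rewrite mul1r.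
Qed.

Lemma principal_Cplus_Cideal b : C_ideal C (ideal_add (principal b) (Cplus C b)).
Proof.
have CbI : is_ideal (Cplus C b) := ideal_gen_ideal _.
split; first exact: ideal_add_ideal (principal_ideal b) CbI.
move=> e phi _ Cphi [_ [j [[r ->] bj ->]]].
have [_ CbC] := Cplus_Cideal b.
rewrite (C_additive _ _ Cphi).
(* phi in C_0 is R-linear, so phi (r b) is in Rb; for e > 0 it generates C_+b. *)
case: e Cphi => [|e] Cphi.
  exists (r * phi 1 * b), (phi j); split; first by exists (r * phi 1).
    exact: CbC Cphi bj.
  by rewrite -[r * b]mulr1 C0_linear // mulrAC.
exists 0, (phi (r * b) + phi j); split; first by exists 0; rewrite mul0r.
  by apply: idealD (CbC _ _ _ Cphi bj) => // I _ gen; apply: gen; exists e.+1, phi, r.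
by rewrite add0r.
Qed.

Lemma test_ideal_principal_Cplus a b : test_element C a b ->
  forall x, test_ideal C a x <-> ideal_add (principal b) (Cplus C b) x.
Proof.
move=> [b_test bNU] x; split.
  apply; first exact: principal_Cplus_Cideal.
  move=> sub; apply/bNU/sub; exists b, 0; rewrite addr0; split=> //.
    by exists 1; rewrite mul1r.
  exact: ideal0 (ideal_gen_ideal _).
move=> [_ [j [[r ->] bj ->]]] J [JI JC] JNU.
have Jb := b_test J (conj JI JC) JNU.
apply: idealD => //; first exact: idealMl.
by apply: bj => // _ [e [phi [s [_ Cphi ->]]]]; apply: JC Cphi _; apply: idealMl.
Qed.

Lemma purely_F_regular_principal_test_one a L : prime_decomposition a L ->
  purely_F_regular C a -> principal_test_element C a 1.
Proof.
move=> aL [a_nd a_pfr]; split; first by case=> q [[[_ q_N1 _] _] /q_N1].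
move=> r rNU; apply: Cplus_one_single; apply: NNPP => rCN1.
have [q [q_min rCq]] := a_pfr _ (Cplus_Cideal r) rCN1.
apply: rNU; exists q; split; first exact: minimal_prime_assoc aL q_min.
apply: rCq; apply: Cplus_self; apply: NNPP => C1N1.
have [q' [q'_min C1q']] := a_pfr _ (Cplus_Cideal 1) C1N1.
by have [_ _] := a_nd q' q'_min; apply.
Qed.

Lemma principal_test_one_purely_F_regular a L :
  is_radical a -> prime_decomposition a L -> non_degenerate C a ->
  principal_test_element C a 1 -> purely_F_regular C a.
Proof.
move=> a_rad aL a_nd [_ one_test]; split=> // J [JI JC] JN1.
have JU x : J x -> inU a x.
  move=> Jx; apply: NNPP => xNU; have [e [phi [_ Cphi phix]]] := one_test x xNU.
  by apply: JN1; rewrite -phix; apply: JC Cphi Jx.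
apply: (prime_avoidance _ _ JI (fun x Jx => inU_minimal a_rad aL (JU x Jx))).
- by move=> q [].
- by move=> q q' [_ _ q_min] [q'_prime aq' _]; apply: q_min.
Qed.

End CartierAlgebra.

Theorem theorem2p12 (R : comNzRingType) (p : nat)
  (C : nat -> (R -> R) -> Prop) (a : R -> Prop) :
  prime p -> p \in [pchar R] -> noetherian R -> F_finite R p ->
  is_pair p C -> is_radical a -> C_ideal C a -> non_degenerate C a ->
  (forall b, test_element C a b ->
     forall x, test_ideal C a x <-> ideal_add (principal b) (Cplus C b) x) /\
  (purely_F_regular C a <-> principal_test_element C a 1).
Proof.
move=> p_prime _ RN _ C_pair a_rad _ a_nd.
have [L aL] := radical_prime_decomposition RN a_rad.
split; first exact: (test_ideal_principal_Cplus C_pair (a := a)).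
split; first exact: (purely_F_regular_principal_test_one C_pair (prime_gt0 p_prime) aL).
exact: (principal_test_one_purely_F_regular a_rad aL a_nd).
Qed.
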